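(* Let $(X,\|\cdot\|)$ be a convex normed space and let $S\subset X$ be a subset such that every sequence in $S$ has a subsequence converging in $X$. Then $S$ is a uniformly convex subset of $X$.
   Context: A normed space $X$ is convex if for all $u,v\in X$ with $u\ne v$ and $\|u\|=\|v\|=1$ we have $\|u+v\|<2$. A subset $S\subset X$ is called uniformly convex if for every $\varepsilon>0$ there exists $\delta\in(0,1)$ such that for all $u,v\in S$ with $\|u\|=\|v\|=1$ and $\|u-v\|\ge\varepsilon$ we have $\|u+v\|\le 2-\delta$ (in particular, a subset containing no unit vectors is uniformly convex). *)

From HB Require Import structures.
From mathcomp Require Import all_boot all_order all_algebra.
From mathcomp Require Import all_classical all_reals all_analysis.
Set Implicit Arguments. Unset Strict Implicit. Unset Printing Implicit Defensive.
Import Order.TTheory GRing.Theory Num.Theory.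
Local Open Scope classical_set_scope.
Local Open Scope ring_scope.

Definition convex_space (R : realType) (X : normedModType R) : Prop :=
  forall u v : X, u <> v -> `|u| = 1 -> `|v| = 1 -> `|u + v| < 2.

Definition uniformly_convex_subset (R : realType) (X : normedModType R)
  (S : set X) : Prop :=
  forall eps : R, 0 < eps ->
    exists delta : R, 0 < delta /\ delta < 1 /\
      forall u v : X, S u -> S v -> `|u| = 1 -> `|v| = 1 ->
        eps <= `|u - v| -> `|u + v| <= 2 - delta.

Definition rel_seq_compact (R : realType) (X : normedModType R)
  (S : set X) : Prop :=
  forall x : nat -> X, (forall n, S (x n)) ->
    exists phi : nat -> nat,
      (forall m n, (m < n)%N -> (phi m < phi n)%N) /\
      exists l : X, (x \o phi) @ \oo --> l.

From HB Require Import structures.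
From mathcomp Require Import all_boot all_order all_algebra.
From mathcomp Require Import all_classical all_reals all_analysis.
Import Order.TTheory GRing.Theory Num.Theory numFieldNormedType.Exports.
Local Open Scope classical_set_scope.
Local Open Scope ring_scope.

(* If uniform convexity failed for some eps, there would be pairs
   (u_n, v_n) of eps-separated unit vectors of S with |u_n + v_n| -> 2.  A
   common convergent subsequence yields limits a, b with |a| = |b| = 1,
   |a - b| >= eps and |a + b| = 2, contradicting the convexity of X. *)

Lemma homo_ltn_geq {phi : nat -> nat} : {homo phi : m n / (m < n)%N} ->
  forall n, (n <= phi n)%N.
Proof.
by move=> phi_incr; elim=> // n /leq_ltn_trans; apply; apply: phi_incr.
Qed.

Lemma homo_ltn_cvg_oo {phi : nat -> nat} : {homo phi : m n / (m < n)%N} ->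
  phi @ \oo --> \oo.
Proof.
move=> phi_incr P [N _ PN]; exists N => // n /= Nn; apply: PN => /=.
exact: leq_trans Nn (homo_ltn_geq phi_incr n).
Qed.

Lemma cvg_subseq {T : topologicalType} {u : nat -> T} {phi : nat -> nat}
    {l : T} :
  {homo phi : m n / (m < n)%N} -> u @ \oo --> l -> u \o phi @ \oo --> l.
Proof. by move=> phi_incr; apply: cvg_comp; apply: homo_ltn_cvg_oo. Qed.

Section UniformlyConvexSubset.
Context {R : realType} {X : normedModType R}.
Implicit Types (S : set X) (u v : nat -> X).

Lemma closed_cvg_norm {A : set R} {x : nat -> X} {a : X} :
  closed A -> (forall n, A `|x n|) -> x @ \oo --> a -> A `|a|.
Proof.
move=> A_closed Ax xa.
by apply: (closed_cvg _ A_closed _ _ (cvg_norm xa)); apply: nearW.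
Qed.

Lemma rel_seq_compact_pair {S u v} : rel_seq_compact S ->
  (forall n, S (u n)) -> (forall n, S (v n)) ->
  exists phi : nat -> nat, {homo phi : m n / (m < n)%N} /\
    exists a b : X, u \o phi @ \oo --> a /\ v \o phi @ \oo --> b.
Proof.
move=> Scpt Su Sv.
have [phi [phi_incr [a ua]]] := Scpt u Su.
have [psi [psi_incr [b vb]]] := Scpt (v \o phi) (fun n => Sv (phi n)).
exists (phi \o psi); split=> [m n mn|]; first exact/phi_incr/psi_incr.
by exists a, b; split; [exact: cvg_subseq ua | exact: vb].
Qed.

Lemma uniformly_convex_subset_seq S :
  (forall (eps : R) u v, 0 < eps ->
     (forall n, S (u n)) -> (forall n, S (v n)) ->
     (forall n, `|u n| = 1) -> (forall n, `|v n| = 1) ->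
     (forall n, eps <= `|u n - v n|) ->
     ~ `|u n + v n| @[n --> \oo] --> (2 : R)) ->
  uniformly_convex_subset S.
Proof.
move=> no_seq eps eps_gt0; apply: contrapT => no_delta.
(* delta_n := harmonic n.+1 = 1/(n+2), since delta must lie in (0, 1). *)
have pair_n n : exists p : X * X, [/\ S p.1 /\ S p.2, `|p.1| = 1, `|p.2| = 1,
    eps <= `|p.1 - p.2| & 2 - harmonic n.+1 < `|p.1 + p.2|].
  apply: contrapT => no_pair; apply: no_delta; exists (harmonic n.+1).
  split; first exact: harmonic_gt0.
  split; first by rewrite /= invf_lt1 ?ltr1n.
  move=> x y Sx Sy x1 y1 xy_eps; rewrite leNgt; apply/negP => xy_big.
  by apply: no_pair; exists (x, y).
have [p pP] := choice pair_n.
apply: (no_seq eps (fst \o p) (snd \o p) eps_gt0) => [n|n|n|n|n|];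
  try by have [[]] := pP n.
apply: (@squeeze_cvgr _ _ _ _ (fun n => 2 - harmonic n.+1) (cst 2)).
- apply: nearW => n; have [_ u1 v1 _ /ltW lower] := pP n.
  by rewrite lower /= (le_trans (ler_normD _ _)) // u1 v1.
- rewrite -[X in _ --> X]subr0; apply: cvgB; first exact: cvg_cst.
  by have := @cvg_harmonic R; rewrite -cvg_shiftS.
- exact: cvg_cst.
Qed.

End UniformlyConvexSubset.

Theorem mainTheorem6 (R : realType) (X : normedModType R) (S : set X) :
  convex_space X -> rel_seq_compact S -> uniformly_convex_subset S.
Proof.
move=> Xconv Scpt; apply: uniformly_convex_subset_seq.
move=> eps u v eps_gt0 Su Sv u1 v1 uv_eps uv_2.
have [phi [phi_incr [a [b [ua vb]]]]] := rel_seq_compact_pair Scpt Su Sv.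
have a1 : `|a| = 1 := closed_cvg_norm (@closed_eq R 1) (fun n => u1 (phi n)) ua.
have b1 : `|b| = 1 := closed_cvg_norm (@closed_eq R 1) (fun n => v1 (phi n)) vb.
have ab_eps : eps <= `|a - b|.
  exact: closed_cvg_norm (@closed_ge R eps) (fun n => uv_eps (phi n))
    (cvgB ua vb).
have ab_2 : `|a + b| = 2.
  apply: (cvg_unique (@Rhausdorff R) (cvg_norm (cvgD ua vb))).
  exact: cvg_subseq phi_incr uv_2.
have a_neq_b : a <> b.
  by move=> eab; move: ab_eps; rewrite eab subrr normr0 leNgt eps_gt0.
by move: (Xconv a b a_neq_b a1 b1); rewrite ab_2 ltxx.
Qed.
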